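(* The weighted greedy algorithm w-HHL is an $O(\sqrt n\log n)$-approximation algorithm for HL: on every input graph with $n$ vertices, the hub labeling it outputs has total size at most $O(\sqrt n\log n)$ times the minimum total size of a hub labeling of that graph.
   Context: Input: a directed graph $G=(V,E)$, $n=|V|$, with nonnegative arc lengths and no zero-length cycles. A hub labeling (HL) assigns to each $v$ a forward label $L_f(v)\subseteq V$ and backward label $L_b(v)\subseteq V$ such that for every ordered pair $(u,w)$ with $w$ reachable from $u$, $L_f(u)\cap L_b(w)$ contains a vertex on some shortest $u$–$w$ path; its size is $\sum_v(|L_f(v)|+|L_b(v)|)$. (Undirected graphs: $L_f=L_b=L$, unordered pairs, size $\sum_v|L(v)|$.) w-HHL: start with empty labels; $U$ is the set of uncovered pairs. For each not-yet-selected vertex $v$, the center graph $G_v$ is the bipartite graph with two copies $X,Y$ of $V$ and an arc $(u,w)$ for each $(u,w)\in U$ having a shortest $u$–$w$ path through $v$, with isolated vertices deleted (undirected case: graph on $V$ with an edge, possibly a loop, for each such uncovered unordered pair, isolated vertices deleted). In each iteration w-HHL selects a not-yet-selected $v$ whose center graph has maximum density (number of edges divided by number of non-isolated vertices; ties arbitrary) and adds $v$ to $L_f(u)$ for each vertex $u\in X$ and $L_b(w)$ for each $w\in Y$ of that center graph (undirected: to $L(u)$ for each of its vertices $u$), until all pairs are covered. *)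

From HB Require Import structures.
From mathcomp Require Import all_boot all_order all_algebra.
From mathcomp Require Import boolp reals exp.
Set Implicit Arguments. Unset Strict Implicit. Unset Printing Implicit Defensive.
Import Order.TTheory GRing.Theory Num.Theory.
Local Open Scope ring_scope.

Section HubLabeling.
Variables (R : realType) (V : finType) (E : rel V) (len : V -> V -> R).

(** Walks: [p] is a walk from [u] to [w] along arcs of [E]; its vertices are
    [u :: p]; its length is the sum of the arc lengths. *)
Definition walk (u w : V) (p : seq V) : bool := path E u p && (last u p == w).
Definition walk_len (u : V) (p : seq V) : R :=
  \sum_(e <- zip (u :: p) p) len e.1 e.2.
Definition reachable (u w : V) : bool := connect E u w.
Definition shortest_walk (u w : V) (p : seq V) : Prop :=
  walk u w p /\ forall q, walk u w q -> walk_len u p <= walk_len u q.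
Definition on_shortest (u w v : V) : Prop :=
  exists p, shortest_walk u w p /\ v \in u :: p.

Definition cycle_len (c : seq V) : R := \sum_(e <- zip c (rot 1 c)) len e.1 e.2.

Definition directed_ok : Prop :=
  (forall u w, E u w -> 0 <= len u w) /\
  (forall c : seq V, c != [::] -> cycle E c -> 0 < cycle_len c).

Definition undirected_ok : Prop :=
  symmetric E /\ irreflexive E /\ (forall u w, len u w = len w u) /\
  (forall u w, E u w -> 0 <= len u w) /\
  (forall c : seq V, (3 <= size c)%N -> uniq c -> cycle E c -> 0 < cycle_len c).

Definition dcovered (Lf Lb : V -> {set V}) (u w : V) : Prop :=
  exists h, [/\ h \in Lf u, h \in Lb w & on_shortest u w h].
Definition is_dHL (Lf Lb : V -> {set V}) : Prop :=
  forall u w, reachable u w -> dcovered Lf Lb u w.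
Definition dHL_size (Lf Lb : V -> {set V}) : nat :=
  \sum_(v : V) (#|Lf v| + #|Lb v|)%N.

Definition d_uncovered (Lf Lb : V -> {set V}) : {set V * V} :=
  [set p | reachable p.1 p.2 && ~~ `[< dcovered Lf Lb p.1 p.2 >]].
(** Center graph G_v: arcs, and the non-isolated vertices of the copies X, Y. *)
Definition dcg_arcs Lf Lb (v : V) : {set V * V} :=
  [set p in d_uncovered Lf Lb | `[< on_shortest p.1 p.2 v >]].
Definition dcg_X Lf Lb v : {set V} := [set p.1 | p in dcg_arcs Lf Lb v].
Definition dcg_Y Lf Lb v : {set V} := [set p.2 | p in dcg_arcs Lf Lb v].
Definition dcg_density Lf Lb v : R :=
  (#|dcg_arcs Lf Lb v|)%:R / (#|dcg_X Lf Lb v| + #|dcg_Y Lf Lb v|)%:R.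

Record dstate := DState {
  d_sel : {set V}; d_Lf : V -> {set V}; d_Lb : V -> {set V} }.

Definition d_init : dstate := DState set0 (fun _ => set0) (fun _ => set0).

Definition d_step (s s' : dstate) : Prop :=
  d_uncovered (d_Lf s) (d_Lb s) != set0 /\
  exists v, [/\ v \notin d_sel s,
    (forall v', v' \notin d_sel s ->
        dcg_density (d_Lf s) (d_Lb s) v' <= dcg_density (d_Lf s) (d_Lb s) v),
    d_sel s' = v |: d_sel s,
    (forall u, d_Lf s' u =
        if u \in dcg_X (d_Lf s) (d_Lb s) v then v |: d_Lf s u else d_Lf s u) &
    (forall w, d_Lb s' w =
        if w \in dcg_Y (d_Lf s) (d_Lb s) v then v |: d_Lb s w else d_Lb s w)].

Inductive d_reach : dstate -> Prop :=
  | d_reach0 : d_reach d_init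
  | d_reachS s s' : d_reach s -> d_step s s' -> d_reach s'.

Definition whhl_output (Lf Lb : V -> {set V}) : Prop :=
  exists S, d_reach (DState S Lf Lb) /\ d_uncovered Lf Lb = set0.

Definition ucovered (L : V -> {set V}) (u w : V) : Prop :=
  exists h, [/\ h \in L u, h \in L w & on_shortest u w h].
Definition is_uHL (L : V -> {set V}) : Prop :=
  forall u w, reachable u w -> ucovered L u w.
Definition uHL_size (L : V -> {set V}) : nat := \sum_(v : V) #|L v|.

(** Uncovered unordered pairs {u, w} (possibly u = w), as sets [set u; w]. *)
Definition u_uncovered (L : V -> {set V}) : {set {set V}} :=
  [set e : {set V} | `[< exists u w, [/\ e = [set u; w], reachable u w &
                                         ~ ucovered L u w] >]].
Definition ucg_edges L (v : V) : {set {set V}} :=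
  [set e in u_uncovered L |
     `[< exists u w, e = [set u; w] /\ on_shortest u w v >]].
Definition ucg_verts L v : {set V} := \bigcup_(e in ucg_edges L v) e.
Definition ucg_density L v : R :=
  (#|ucg_edges L v|)%:R / (#|ucg_verts L v|)%:R.

Record ustate := UState { u_sel : {set V}; u_L : V -> {set V} }.
Definition u_init : ustate := UState set0 (fun _ => set0).

Definition u_step (s s' : ustate) : Prop :=
  u_uncovered (u_L s) != set0 /\
  exists v, [/\ v \notin u_sel s,
    (forall v', v' \notin u_sel s ->
        ucg_density (u_L s) v' <= ucg_density (u_L s) v),
    u_sel s' = v |: u_sel s &
    (forall u, u_L s' u =
        if u \in ucg_verts (u_L s) v then v |: u_L s u else u_L s u)].

Inductive u_reach : ustate -> Prop :=
  | u_reach0 : u_reach u_init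
  | u_reachS s s' : u_reach s -> u_step s s' -> u_reach s'.

Definition whhl_output_u (L : V -> {set V}) : Prop :=
  exists S, u_reach (UState S L) /\ u_uncovered L = set0.

End HubLabeling.

From HB Require Import structures.
From mathcomp Require Import all_boot all_order all_algebra.
From mathcomp Require Import boolp reals exp.
From mathcomp Require Import ring lra.

Set Implicit Arguments.
Unset Strict Implicit.
Unset Printing Implicit Defensive.
Import Order.TTheory GRing.Theory Num.Theory.
Local Open Scope ring_scope.

(* Charging argument with a logarithmic potential.  Let [m] pairs be uncovered
   and let [L'] be any hub labeling.  Each uncovered pair is covered in [L'] by
   a hub [w]; [w] is not yet selected, so the pair is an arc of the center
   graph of [w].  The pairs charged to [w] number at most [s_w^2], where [s_w]
   counts the labels of [L'] containing [w], and at most [2 n D], where [D] is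
   the maximal center-graph density; hence [m <= 2 sqrt n D |L'|].  A greedy
   step adds [c] label entries and covers [a = D c] pairs, so
   [c <= 2 sqrt n |L'| a / m]; the sum of the ratios [a / m] over the run is
   at most [ln (n^2) + 1 <= 4 ln n]. *)

Section Potential.
Variable R : realType.

(* [ln m + 1] bounds the harmonic number [H_m]; like [H_m], its decrease
   from [m] to [m - a] is at least [a / m]. *)
Definition lnH (m : nat) : R := if m is 0 then 0 else ln m%:R + 1.

Lemma lnH_ge0 m : 0 <= lnH m.
Proof.
case: m => [|m] //=; have := @ln_ge0 R m.+1%:R; rewrite ler1n => /(_ isT); lra.
Qed.

Lemma lnH_le m m' : (m' <= m)%N -> lnH m' <= lnH m.
Proof.
case: m' => [|m'] le_m'm; first exact: lnH_ge0.
case: m le_m'm => // m le_m'm.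
by rewrite /lnH lerD2r ler_ln ?posrE ?ltr0n // ler_nat.
Qed.

Lemma lnH_decr m a : (0 < m)%N -> (a <= m)%N ->
  a%:R / m%:R <= lnH m - lnH (m - a).
Proof.
case: m => // m _ le_am; have mR_gt0 : 0 < (m.+1%:R : R) by rewrite ltr0n.
have [lt_am|le_ma] := ltnP a m.+1; last first.
  have -> : a = m.+1 by apply/eqP; rewrite eqn_leq le_am.
  rewrite subnn divff ?gt_eqF //=.
  have := @ln_ge0 R m.+1%:R; rewrite ler1n => /(_ isT); lra.
have ma_gt0 : (0 < m.+1 - a)%N by rewrite subn_gt0.
have -> : lnH (m.+1 - a) = ln (m.+1 - a)%:R + 1 by case: (m.+1 - a)%N ma_gt0.
have lt_1 : a%:R / m.+1%:R < 1 :> R by rewrite ltr_pdivrMr // mul1r ltr_nat.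
have := @le_ln1Dx R (- (a%:R / m.+1%:R)).
rewrite (_ : 1 + _ = (m.+1 - a)%:R / m.+1%:R) ?ln_div ?posrE ?ltr0n //; last first.
  by rewrite natrB ?(ltnW lt_am) // mulrBl divff ?gt_eqF.
rewrite /lnH /=; move: lt_1; set t := a%:R / _; lra.
Qed.

Lemma lnH_sqr_le n : (2 <= n)%N -> lnH (n * n) <= 4 * ln n%:R.
Proof.
move=> n_ge2; have nR_ge2 : 2 <= (n%:R : R) by rewrite ler_nat.
have nR_gt0 : 0 < (n%:R : R) by lra.
have ln_ge_half : 1 <= 2 * ln (n%:R : R).
  have := @le_ln1Dx R ((n%:R)^-1 - 1); rewrite addrCA subrr addr0 lnV ?posrE //.
  have : (n%:R : R)^-1 <= 2^-1 by rewrite lef_pV2 ?posrE; lra.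
  have : 0 < (n%:R : R)^-1 by rewrite invr_gt0.
  lra.
case: n n_ge2 nR_ge2 nR_gt0 ln_ge_half => // n _ nR_ge2 nR_gt0 ln_ge_half.
have -> : lnH (n.+1 * n.+1) = ln (n.+1 * n.+1)%:R + 1 by rewrite mulSn.
by rewrite natrM lnM ?posrE //; lra.
Qed.

(* Use [b <= s^2] when [s <= 2 sqrt n D], and [b <= 2 n D] otherwise. *)
Lemma le_sqrt_density (b s n : nat) (D : R) : (b <= s * s)%N ->
  b%:R <= D * (2 * n)%:R -> 1 / 2 <= D -> b%:R <= 2 * Num.sqrt n%:R * D * s%:R.
Proof.
move=> le_bss le_bD D_ge.
set q := Num.sqrt (n%:R : R); have q_ge0 : 0 <= q by exact: sqrtr_ge0.
have n_q : (n%:R : R) = q * q by rewrite -expr2 sqr_sqrtr ?ler0n.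
rewrite natrM n_q in le_bD.
have s_ge0 : 0 <= (s%:R : R) by rewrite ler0n.
have bss : (b%:R : R) <= s%:R * s%:R by rewrite -natrM ler_nat.
have [le_s|lt_s] := lerP s%:R (2 * q * D).
  by apply: le_trans bss _; rewrite mulrC ler_wpM2r.
have le_b_qs : (b%:R : R) <= q * s%:R.
  apply: le_trans le_bD _.
  have -> : D * (2%:R * (q * q)) = q * (2 * q * D) by ring.
  by rewrite ler_wpM2l // ltW.
have qs_ge0 : 0 <= q * s%:R by exact: mulr_ge0.
nra.
Qed.

(* [m] uncovered pairs are charged to hubs [i], [b i] pairs each; hub [i] has
   load [s i] in a labeling of size [OPT] and a center graph with [a i] arcs
   and [c i] vertices, whose density is at most the greedy density [D]. *)
Lemma uncovered_le_density (I : finType) (m n OPT : nat) (b s a c : I -> nat)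
    (D : R) :
  0 <= D -> (m <= \sum_i b i)%N -> (\sum_i s i <= OPT)%N ->
  (forall i, b i <= s i * s i)%N ->
  (forall i, (0 < b i)%N ->
     [/\ (b i <= a i)%N, (0 < c i)%N, (c i <= 2 * a i)%N,
      (c i <= 2 * n)%N & (a i)%:R / (c i)%:R <= D]) ->
  m%:R <= 2 * Num.sqrt n%:R * D * OPT%:R.
Proof.
move=> D_ge0 le_m_b le_s_OPT b_sq hub_density.
have K_ge0 : 0 <= 2 * Num.sqrt (n%:R : R) * D by rewrite !mulr_ge0 ?sqrtr_ge0.
apply: le_trans (_ : \sum_i (b i)%:R <= _); first by rewrite -natr_sum ler_nat.
apply: le_trans (_ : \sum_i 2 * Num.sqrt n%:R * D * (s i)%:R <= _); last first.
  by rewrite -mulr_sumr -natr_sum ler_wpM2l ?ler_nat.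
apply: ler_sum => i _; have [->|b_gt0] := posnP (b i).
  by rewrite mulr_ge0 ?ler0n.
have [le_ba c_gt0 le_ca le_cn dens] := hub_density i b_gt0.
have cR_gt0 : 0 < (c i)%:R :> R by rewrite ltr0n.
have a_le : (a i)%:R <= D * (c i)%:R :> R by rewrite -ler_pdivrMr.
have ba : (b i)%:R <= (a i)%:R :> R by rewrite ler_nat.
have ca : (c i)%:R <= 2 * (a i)%:R :> R by rewrite -natrM ler_nat.
have cn : (c i)%:R <= (2 * n)%:R :> R by rewrite ler_nat.
have a_ge1 : 1 <= (a i)%:R :> R by rewrite ler1n (leq_trans b_gt0).
apply: le_sqrt_density; first exact: b_sq.
  by apply: le_trans ba (le_trans a_le _); rewrite ler_wpM2l.
nra.
Qed.

Lemma potential_step (K : R) (sz sz' c a m m' M0 : nat) :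
  0 <= K -> (0 < m)%N -> (a <= m)%N -> (m' <= m - a)%N -> (sz' <= sz + c)%N ->
  m%:R <= K * (a%:R / c%:R) ->
  sz%:R <= K * (lnH M0 - lnH m) -> sz'%:R <= K * (lnH M0 - lnH m').
Proof.
move=> K_ge0 m_gt0 le_am le_m' le_sz' dens sz_le.
have mR_gt0 : 0 < (m%:R : R) by rewrite ltr0n.
have c_le : (c%:R : R) <= K * (a%:R / m%:R).
  have [->|c_gt0] := posnP c; first by rewrite mulr_ge0 ?divr_ge0 ?ler0n.
  have cR_gt0 : 0 < (c%:R : R) by rewrite ltr0n.
  rewrite mulrA ler_pdivlMr // mulrC -ler_pdivlMr // -mulrA; exact: dens.
have := lnH_decr m_gt0 le_am; have := lnH_le le_m'.
have : (sz'%:R : R) <= sz%:R + c%:R by rewrite -natrD ler_nat.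
move: c_le; set t := a%:R / _; nra.
Qed.

Lemma approx_from_potential (n M0 sz OPT : nat) : (2 <= n)%N -> (M0 <= n * n)%N ->
  sz%:R <= 2 * Num.sqrt n%:R * OPT%:R * (lnH M0 - lnH 0) :> R ->
  sz%:R <= 8 * Num.sqrt n%:R * ln n%:R * OPT%:R :> R.
Proof.
move=> n_ge2 le_M0 sz_le; apply: le_trans sz_le _; rewrite subr0.
have -> : 8 * Num.sqrt n%:R * ln n%:R * OPT%:R =
  2 * Num.sqrt n%:R * OPT%:R * (4 * ln n%:R) :> R by ring.
rewrite ler_wpM2l ?mulr_ge0 ?sqrtr_ge0 ?ler0n //.
exact: le_trans (lnH_le le_M0) (lnH_sqr_le n_ge2).
Qed.
End Potential.

Lemma card_bigcup_le (I T : finType) (P : pred I) (F : I -> {set T}) :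
  (#|\bigcup_(i | P i) F i| <= \sum_(i | P i) #|F i|)%N.
Proof.
elim/big_rec2: _ => [|i x y _ le_xy]; first by rewrite cards0.
by apply: leq_trans (leq_card_setU _ _) _; rewrite leq_add2l.
Qed.

Lemma card_setU1_if_le (T : finType) (b : bool) (x : T) (A : {set T}) :
  (#|if b then x |: A else A| <= #|A| + b)%N.
Proof. by case: b; rewrite ?addn0 // cardsU1 addnC leq_add2l leq_b1. Qed.

Definition hub_users (I T : finType) (L : I -> {set T}) (w : T) : {set I} :=
  [set u | w \in L u].

Lemma sum_card_hub_users (I T : finType) (L : I -> {set T}) :
  (\sum_w #|hub_users L w| = \sum_u #|L u|)%N.
Proof.
have users w : #|hub_users L w| = (\sum_u (w \in L u))%N.
  by rewrite -sum1dep_card big_mkcond.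
rewrite (eq_bigr _ (fun w _ => users w)) exchange_big; apply: eq_bigr => u _.
by rewrite -sum1_card [RHS]big_mkcond.
Qed.

Section Directed.
Variables (R : realType) (V : finType) (E : rel V) (len : V -> V -> R).

Local Notation on_shortest := (on_shortest E len).
Local Notation dcovered := (dcovered E len).
Local Notation uncovered := (d_uncovered E len).
Local Notation arcs := (dcg_arcs E len).
Local Notation X := (dcg_X E len).
Local Notation Y := (dcg_Y E len).

Lemma dcovered_mono (Lf Lb Lf' Lb' : V -> {set V}) u w :
  (forall x, Lf x \subset Lf' x) -> (forall x, Lb x \subset Lb' x) ->
  dcovered Lf Lb u w -> dcovered Lf' Lb' u w.
Proof.
move=> sub_f sub_b [h [hf hb sh]].
by exists h; split=> //; [exact: subsetP (sub_f u) _ hf | exact: subsetP (sub_b w) _ hb].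
Qed.

Lemma in_d_uncovered Lf Lb p :
  (p \in uncovered Lf Lb) = reachable E p.1 p.2 && ~~ `[< dcovered Lf Lb p.1 p.2 >].
Proof. by rewrite inE. Qed.

Lemma dcg_arcs_sub Lf Lb v : arcs Lf Lb v \subset uncovered Lf Lb.
Proof. by apply/subsetP => p; rewrite inE => /andP[]. Qed.

Lemma card_dcg_verts_le_arcs Lf Lb v :
  (#|X Lf Lb v| + #|Y Lf Lb v| <= 2 * #|arcs Lf Lb v|)%N.
Proof. by rewrite mul2n -addnn leq_add // leq_imset_card. Qed.

Lemma card_dcg_verts_le Lf Lb v : (#|X Lf Lb v| + #|Y Lf Lb v| <= 2 * #|V|)%N.
Proof. by rewrite mul2n -addnn leq_add // max_card. Qed.

Lemma card_dcg_verts_gt0 Lf Lb v : (0 < #|arcs Lf Lb v|)%N ->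
  (0 < #|X Lf Lb v| + #|Y Lf Lb v|)%N.
Proof.
case/card_gt0P => p p_arc; rewrite addn_gt0 card_gt0; apply/orP; left.
by apply/set0Pn; exists p.1; apply/imsetP; exists p.
Qed.

Definition dhub_pairs Lf Lb (Lf' Lb' : V -> {set V}) w : {set V * V} :=
  [set p in uncovered Lf Lb |
     [&& w \in Lf' p.1, w \in Lb' p.2 & `[< on_shortest p.1 p.2 w >]]].

Lemma d_uncovered_sub_hub_pairs Lf Lb Lf' Lb' : is_dHL E len Lf' Lb' ->
  uncovered Lf Lb \subset \bigcup_w dhub_pairs Lf Lb Lf' Lb' w.
Proof.
move=> HL'; apply/subsetP => p p_unc; have := p_unc.
rewrite in_d_uncovered => /andP[/HL' [h [hf hb sh]] _].
by apply/bigcupP; exists h => //; rewrite inE p_unc hf hb; apply/asboolP.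
Qed.

Lemma dhub_pairs_sub_arcs Lf Lb Lf' Lb' w :
  dhub_pairs Lf Lb Lf' Lb' w \subset arcs Lf Lb w.
Proof. by apply/subsetP => p; rewrite !inE => /andP[-> /and3P[_ _ ->]]. Qed.

Definition dhub_load (Lf' Lb' : V -> {set V}) w : nat :=
  #|hub_users Lf' w| + #|hub_users Lb' w|.

Lemma card_dhub_pairs Lf Lb Lf' Lb' w :
  (#|dhub_pairs Lf Lb Lf' Lb' w| <= dhub_load Lf' Lb' w * dhub_load Lf' Lb' w)%N.
Proof.
apply: leq_trans (_ : #|setX (hub_users Lf' w) (hub_users Lb' w)| <= _)%N.
  apply: subset_leq_card; apply/subsetP => p.
  by rewrite !inE => /andP[_ /and3P[-> -> _]].
by rewrite cardsX leq_mul ?leq_addr ?leq_addl.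
Qed.

Lemma sum_dhub_load Lf' Lb' : (\sum_w dhub_load Lf' Lb' w = dHL_size Lf' Lb')%N.
Proof. by rewrite big_split /= !sum_card_hub_users -big_split. Qed.

Definition dselected_covered (s : dstate V) : Prop :=
  forall v, v \in d_sel s -> forall u w, reachable E u w ->
    on_shortest u w v -> dcovered (d_Lf s) (d_Lb s) u w.

Lemma d_uncovered_le_density (s : dstate V) v Lf' Lb' :
  dselected_covered s -> is_dHL E len Lf' Lb' ->
  (forall v', v' \notin d_sel s ->
     dcg_density E len (d_Lf s) (d_Lb s) v' <= dcg_density E len (d_Lf s) (d_Lb s) v) ->
  #|uncovered (d_Lf s) (d_Lb s)|%:R <= 2 * Num.sqrt #|V|%:R *
     dcg_density E len (d_Lf s) (d_Lb s) v * (dHL_size Lf' Lb')%:R.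
Proof.
move=> sel_cov HL' greedy.
apply: (uncovered_le_density (b := fun w => #|dhub_pairs (d_Lf s) (d_Lb s) Lf' Lb' w|)
  (s := dhub_load Lf' Lb') (a := fun w => #|arcs (d_Lf s) (d_Lb s) w|)
  (c := fun w => #|X (d_Lf s) (d_Lb s) w| + #|Y (d_Lf s) (d_Lb s) w|)%N).
- by rewrite divr_ge0 ?ler0n.
- exact: leq_trans (subset_leq_card (d_uncovered_sub_hub_pairs _ _ HL'))
    (card_bigcup_le _ _).
- by rewrite sum_dhub_load.
- exact: card_dhub_pairs.
move=> w /= pairs_gt0.
have le_pairs_arcs := subset_leq_card (dhub_pairs_sub_arcs (d_Lf s) (d_Lb s) Lf' Lb' w).
have arcs_gt0 := leq_trans pairs_gt0 le_pairs_arcs.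
split=> //; [exact: card_dcg_verts_gt0 | exact: card_dcg_verts_le_arcs |
             exact: card_dcg_verts_le | apply: greedy].
apply/negP => w_sel; case/card_gt0P: pairs_gt0 => p.
rewrite !inE => /andP[/andP[r /negP uncov] /and3P[_ _ /asboolP sh]].
by apply/uncov/asboolP; exact: sel_cov w_sel _ _ r sh.
Qed.

Section GreedyStep.
Variables (s s' : dstate V) (v : V).
Hypotheses (sel_s' : d_sel s' = v |: d_sel s)
  (Lf_s' : forall u, d_Lf s' u =
     if u \in X (d_Lf s) (d_Lb s) v then v |: d_Lf s u else d_Lf s u)
  (Lb_s' : forall w, d_Lb s' w =
     if w \in Y (d_Lf s) (d_Lb s) v then v |: d_Lb s w else d_Lb s w).

Lemma d_Lf_sub u : d_Lf s u \subset d_Lf s' u.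
Proof. by rewrite Lf_s'; case: ifP => _; [exact: subsetUr | exact: subxx]. Qed.

Lemma d_Lb_sub u : d_Lb s u \subset d_Lb s' u.
Proof. by rewrite Lb_s'; case: ifP => _; [exact: subsetUr | exact: subxx]. Qed.

Lemma dcg_arcs_covered p : p \in arcs (d_Lf s) (d_Lb s) v ->
  dcovered (d_Lf s') (d_Lb s') p.1 p.2.
Proof.
move=> p_arc; have := p_arc; rewrite inE => /andP[_ /asboolP sh].
exists v; split=> //.
- by rewrite Lf_s' ifT ?setU11 //; apply/imsetP; exists p.
- by rewrite Lb_s' ifT ?setU11 //; apply/imsetP; exists p.
Qed.

Lemma card_d_uncovered_step :
  (#|uncovered (d_Lf s') (d_Lb s')| <=
   #|uncovered (d_Lf s) (d_Lb s)| - #|arcs (d_Lf s) (d_Lb s) v|)%N.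
Proof.
rewrite -(setIidPr (dcg_arcs_sub _ _ _)) -cardsD; apply: subset_leq_card.
apply/subsetP => p; rewrite in_setD !in_d_uncovered => /andP[r /asboolP uncov].
rewrite r /=; apply/andP; split.
- by apply: contra_notN uncov => /dcg_arcs_covered.
- apply: contra_notN uncov => /asboolP cov.
  exact: dcovered_mono d_Lf_sub d_Lb_sub cov.
Qed.

Lemma dselected_covered_step : dselected_covered s -> dselected_covered s'.
Proof.
move=> sel_cov v'; rewrite sel_s' in_setU1 => /orP[/eqP ->|v'_sel] u w r sh.
  have [cov|uncov] := boolP `[< dcovered (d_Lf s) (d_Lb s) u w >].
    exact: dcovered_mono d_Lf_sub d_Lb_sub (asboolW cov).
  by apply: (dcg_arcs_covered (p := (u, w))); rewrite !inE r uncov; apply/asboolP.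
exact: dcovered_mono d_Lf_sub d_Lb_sub (sel_cov _ v'_sel _ _ r sh).
Qed.

Lemma dHL_size_step : (dHL_size (d_Lf s') (d_Lb s') <=
  dHL_size (d_Lf s) (d_Lb s) + (#|X (d_Lf s) (d_Lb s) v| + #|Y (d_Lf s) (d_Lb s) v|))%N.
Proof.
rewrite -!sum1_card [\sum_(i in X _ _ _) _]big_mkcond.
rewrite [\sum_(i in Y _ _ _) _]big_mkcond -!big_split /=.
apply: leq_sum => u _.
by rewrite Lf_s' Lb_s' addnACA leq_add ?card_setU1_if_le.
Qed.
End GreedyStep.

Lemma d_reach_potential Lf' Lb' : is_dHL E len Lf' Lb' ->
  forall s, d_reach E len s -> dselected_covered s /\
  (dHL_size (d_Lf s) (d_Lb s))%:R <=
    2 * Num.sqrt #|V|%:R * (dHL_size Lf' Lb')%:R *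
    (lnH R #|uncovered (fun _ => set0) (fun _ => set0)| -
     lnH R #|uncovered (d_Lf s) (d_Lb s)|).
Proof.
move=> HL' s; elim=> [|{}s s' _ [sel_cov size_le] [unc_ne [v [_ greedy sel_s' Lf_s' Lb_s']]]].
  split=> [v|]; first by rewrite in_set0.
  by rewrite /dHL_size big1 ?subrr ?mulr0 // => u _; rewrite cards0.
split; first exact: dselected_covered_step sel_s' Lf_s' Lb_s' sel_cov.
apply: potential_step size_le.
- by rewrite !mulr_ge0 ?sqrtr_ge0 ?ler0n.
- by rewrite card_gt0.
- exact: subset_leq_card (dcg_arcs_sub _ _ _).
- exact: card_d_uncovered_step Lf_s' Lb_s'.
- exact: dHL_size_step Lf_s' Lb_s'.
rewrite mulrAC; exact: d_uncovered_le_density.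
Qed.

Lemma whhl_dir_approx : (2 <= #|V|)%N ->
  forall Lf Lb, whhl_output E len Lf Lb ->
  forall Lf' Lb', is_dHL E len Lf' Lb' ->
  (dHL_size Lf Lb)%:R <=
    8 * Num.sqrt #|V|%:R * ln #|V|%:R * (dHL_size Lf' Lb')%:R :> R.
Proof.
move=> n_ge2 Lf Lb [S [reach_S all_covered]] Lf' Lb' HL'.
have [_] := d_reach_potential HL' reach_S; rewrite /= all_covered cards0.
by apply: approx_from_potential n_ge2 _; rewrite -card_prod max_card.
Qed.
End Directed.

Lemma last_rev_belast (T : Type) (x : T) p : last (last x p) (rev (belast x p)) = x.
Proof.
have e : last x p :: rev (belast x p) = rev (x :: p) by rewrite [in RHS]lastI rev_rcons.
by rewrite -[last _ _]/(last x (last x p :: rev (belast x p))) e rev_cons last_rcons.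
Qed.

Lemma set2_eq (T : finType) (u w u' w' : T) : [set u; w] = [set u'; w'] ->
  (u' = u /\ w' = w) \/ (u' = w /\ w' = u).
Proof.
move=> e.
have in_e x : x \in [set u'; w'] -> x = u \/ x = w by rewrite -e => /set2P.
have in_e' x : x \in [set u; w] -> x = u' \/ x = w' by rewrite e => /set2P.
case: (in_e u' (set21 _ _)) => eu'; case: (in_e w' (set22 _ _)) => ew';
  subst u' w'; auto.
- by case: (in_e' w (set22 _ _)) => ->; left.
- by case: (in_e' u (set21 _ _)) => ->; left.
Qed.

Section Undirected.
Variables (R : realType) (V : finType) (E : rel V) (len : V -> V -> R).
Hypotheses (E_sym : symmetric E) (len_sym : forall u w, len u w = len w u).

Local Notation on_shortest := (on_shortest E len).
Local Notation ucovered := (ucovered E len).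
Local Notation uncovered := (u_uncovered E len).
Local Notation edges := (ucg_edges E len).
Local Notation verts := (ucg_verts E len).

Lemma walk_len_cons u x p : walk_len len u (x :: p) = len u x + walk_len len x p.
Proof. by rewrite /walk_len /= big_cons. Qed.

Lemma walk_len_rcons u p x :
  walk_len len u (rcons p x) = walk_len len u p + len (last u p) x.
Proof.
elim: p u => [|y p IHp] u; first by rewrite /walk_len /= !big_cons !big_nil addr0 add0r.
by rewrite /= !walk_len_cons IHp addrA.
Qed.

Lemma walk_len_rev u p : walk_len len (last u p) (rev (belast u p)) = walk_len len u p.
Proof.
elim: p u => [|x p IHp] u //=.
by rewrite rev_cons walk_len_rcons IHp last_rev_belast walk_len_cons len_sym addrC.
Qed.

Lemma walk_rev u w p : walk E u w p -> walk E w u (rev (belast u p)).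
Proof.
case/andP => p_path /eqP <-; rewrite /walk last_rev_belast eqxx andbT rev_path.
by apply: sub_path p_path => x y; rewrite E_sym.
Qed.

Lemma on_shortest_sym u w h : on_shortest u w h -> on_shortest w u h.
Proof.
case=> p [[p_walk p_min] hp]; have := p_walk; case/andP=> _ /eqP last_p.
exists (rev (belast u p)); split; first split.
- exact: walk_rev.
- move=> q q_walk; have := q_walk; case/andP=> _ /eqP last_q.
  rewrite -{1}last_p walk_len_rev -(walk_len_rev w q) last_q.
  by apply: p_min; exact: walk_rev.
- by rewrite -last_p -rev_rcons -lastI mem_rev.
Qed.

Lemma on_shortest_set2 u w u' w' h : [set u; w] = [set u'; w'] ->
  on_shortest u w h -> on_shortest u' w' h.
Proof. by case/set2_eq=> [[-> ->] // | [-> ->]]; exact: on_shortest_sym. Qed.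

Lemma ucovered_mono (L L' : V -> {set V}) u w :
  (forall x, L x \subset L' x) -> ucovered L u w -> ucovered L' u w.
Proof.
move=> sub [h [hu hw sh]].
by exists h; split=> //; [exact: subsetP (sub u) _ hu | exact: subsetP (sub w) _ hw].
Qed.

Lemma in_u_uncovered L e : e \in uncovered L <->
  exists u w, [/\ e = [set u; w], reachable E u w & ~ ucovered L u w].
Proof. by rewrite inE; split=> /asboolP. Qed.

Lemma in_ucg_edges L v e : e \in edges L v <->
  e \in uncovered L /\ exists u w, e = [set u; w] /\ on_shortest u w v.
Proof.
rewrite inE; split=> [/andP[e_unc /asboolP sh] | [e_unc sh]] //.
by rewrite e_unc; apply/asboolP.
Qed.

Lemma ucg_edges_sub L v : edges L v \subset uncovered L.
Proof. by apply/subsetP => e /in_ucg_edges[]. Qed.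

Lemma card_ucg_verts_le_edges L v : (#|verts L v| <= 2 * #|edges L v|)%N.
Proof.
apply: leq_trans (card_bigcup_le _ _) _.
rewrite -sum1_card big_distrr /=; apply: leq_sum => e /in_ucg_edges[_ [u [w [-> _]]]].
by rewrite cards2 muln1; case: (u != w).
Qed.

Lemma card_ucg_verts_le L v : (#|verts L v| <= 2 * #|V|)%N.
Proof. by apply: leq_trans (max_card _) _; rewrite leq_pmull. Qed.

Lemma card_ucg_verts_gt0 L v : (0 < #|edges L v|)%N -> (0 < #|verts L v|)%N.
Proof.
case/card_gt0P => e e_edge; have := e_edge; case/in_ucg_edges => _ [u [w [e_uw _]]].
by apply/card_gt0P; exists u; apply/bigcupP; exists e; rewrite // e_uw set21.
Qed.

Definition uhub_pairs L (L' : V -> {set V}) w : {set {set V}} :=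
  [set e in uncovered L | `[< exists u w', e = [set u; w'] /\
     [/\ w \in L' u, w \in L' w' & on_shortest u w' w] >]].

Lemma u_uncovered_sub_hub_pairs L L' : is_uHL E len L' ->
  uncovered L \subset \bigcup_w uhub_pairs L L' w.
Proof.
move=> HL'; apply/subsetP => e e_unc; have := e_unc.
case/in_u_uncovered=> u [w [e_uw /HL' [h [hu hw sh]] _]].
by apply/bigcupP; exists h => //; rewrite inE e_unc; apply/asboolP; exists u, w.
Qed.

Lemma uhub_pairs_sub_edges L L' w : uhub_pairs L L' w \subset edges L w.
Proof.
apply/subsetP => e; rewrite inE => /andP[e_unc /asboolP [u [w' [e_uw [_ _ sh]]]]].
by apply/in_ucg_edges; split=> //; exists u, w'.
Qed.

Lemma card_uhub_pairs L L' w :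
  (#|uhub_pairs L L' w| <= #|hub_users L' w| * #|hub_users L' w|)%N.
Proof.
rewrite -cardsX; apply: leq_trans (leq_imset_card (fun p => [set p.1; p.2]) _).
apply: subset_leq_card; apply/subsetP => e.
rewrite inE => /andP[_ /asboolP [u [w' [-> [hu hw' _]]]]].
by apply/imsetP; exists (u, w'); rewrite ?inE ?hu.
Qed.

Definition uselected_covered (s : ustate V) : Prop :=
  forall v, v \in u_sel s -> forall u w, reachable E u w ->
    on_shortest u w v -> ucovered (u_L s) u w.

Lemma u_uncovered_le_density (s : ustate V) v L' :
  uselected_covered s -> is_uHL E len L' ->
  (forall v', v' \notin u_sel s ->
     ucg_density E len (u_L s) v' <= ucg_density E len (u_L s) v) ->
  #|uncovered (u_L s)|%:R <=
    2 * Num.sqrt #|V|%:R * ucg_density E len (u_L s) v * (uHL_size L')%:R.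
Proof.
move=> sel_cov HL' greedy.
apply: (uncovered_le_density (b := fun w => #|uhub_pairs (u_L s) L' w|)
  (s := fun w => #|hub_users L' w|) (a := fun w => #|edges (u_L s) w|)
  (c := fun w => #|verts (u_L s) w|)).
- by rewrite divr_ge0 ?ler0n.
- exact: leq_trans (subset_leq_card (u_uncovered_sub_hub_pairs _ HL'))
    (card_bigcup_le _ _).
- by rewrite sum_card_hub_users.
- exact: card_uhub_pairs.
move=> w /= pairs_gt0.
have le_pairs_edges := subset_leq_card (uhub_pairs_sub_edges (u_L s) L' w).
have edges_gt0 := leq_trans pairs_gt0 le_pairs_edges.
split=> //; [exact: card_ucg_verts_gt0 | exact: card_ucg_verts_le_edges |
             exact: card_ucg_verts_le | apply: greedy].
apply/negP => w_sel; case/card_gt0P: pairs_gt0 => e.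
rewrite inE => /andP[e_unc /asboolP [u [w' [e_uw [_ _ sh]]]]].
case/in_u_uncovered: e_unc => u2 [w2 [e_uw2 r uncov]]; apply: uncov.
by apply: sel_cov w_sel _ _ r _; apply: on_shortest_set2 sh; rewrite -e_uw -e_uw2.
Qed.

Section GreedyStep.
Variables (s s' : ustate V) (v : V).
Hypotheses (sel_s' : u_sel s' = v |: u_sel s)
  (L_s' : forall u, u_L s' u =
     if u \in verts (u_L s) v then v |: u_L s u else u_L s u).

Lemma u_L_sub u : u_L s u \subset u_L s' u.
Proof. by rewrite L_s'; case: ifP => _; [exact: subsetUr | exact: subxx]. Qed.

Lemma ucg_edges_covered e : e \in edges (u_L s) v ->
  forall u w, e = [set u; w] -> ucovered (u_L s') u w.
Proof.
move=> e_edge u w e_uw; have := e_edge; case/in_ucg_edges=> _ [u1 [w1 [e_uw1 sh]]].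
have v_in x : x \in e -> v \in u_L s' x.
  by move=> xe; rewrite L_s' ifT ?setU11 //; apply/bigcupP; exists e.
exists v; split; [apply: v_in | apply: v_in | ]; rewrite ?e_uw ?set21 ?set22 //.
by apply: on_shortest_set2 sh; rewrite -e_uw1 -e_uw.
Qed.

Lemma card_u_uncovered_step :
  (#|uncovered (u_L s')| <= #|uncovered (u_L s)| - #|edges (u_L s) v|)%N.
Proof.
rewrite -(setIidPr (ucg_edges_sub _ _)) -cardsD; apply: subset_leq_card.
apply/subsetP => e e_unc'; have := e_unc'; case/in_u_uncovered=> u [w [e_uw r uncov]].
rewrite in_setD; apply/andP; split.
- by apply/negP => e_edge; exact: uncov (ucg_edges_covered e_edge e_uw).
- apply/in_u_uncovered; exists u, w; split=> // cov.
  exact: uncov (ucovered_mono u_L_sub cov).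
Qed.

Lemma uselected_covered_step : uselected_covered s -> uselected_covered s'.
Proof.
move=> sel_cov v'; rewrite sel_s' in_setU1 => /orP[/eqP ->|v'_sel] u w r sh.
  have [cov|uncov] := pselect (ucovered (u_L s) u w).
    exact: ucovered_mono u_L_sub cov.
  apply: (@ucg_edges_covered [set u; w]) => //.
  by apply/in_ucg_edges; split; [apply/in_u_uncovered; exists u, w | exists u, w].
exact: ucovered_mono u_L_sub (sel_cov _ v'_sel _ _ r sh).
Qed.

Lemma uHL_size_step :
  (uHL_size (u_L s') <= uHL_size (u_L s) + #|verts (u_L s) v|)%N.
Proof.
rewrite -sum1_card big_mkcond -big_split /=; apply: leq_sum => u _.
by rewrite L_s' card_setU1_if_le.
Qed.
End GreedyStep.

Lemma u_reach_potential L' : is_uHL E len L' ->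
  forall s, u_reach E len s -> uselected_covered s /\
  (uHL_size (u_L s))%:R <=
    2 * Num.sqrt #|V|%:R * (uHL_size L')%:R *
    (lnH R #|uncovered (fun _ => set0)| - lnH R #|uncovered (u_L s)|).
Proof.
move=> HL' s; elim=> [|{}s s' _ [sel_cov size_le] [unc_ne [v [_ greedy sel_s' L_s']]]].
  split=> [v|]; first by rewrite in_set0.
  by rewrite /uHL_size big1 ?subrr ?mulr0 // => u _; rewrite cards0.
split; first exact: uselected_covered_step sel_s' L_s' sel_cov.
apply: potential_step size_le.
- by rewrite !mulr_ge0 ?sqrtr_ge0 ?ler0n.
- by rewrite card_gt0.
- exact: subset_leq_card (ucg_edges_sub _ _).
- exact: card_u_uncovered_step L_s'.
- exact: uHL_size_step L_s'.
rewrite mulrAC; exact: u_uncovered_le_density.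
Qed.
End Undirected.

Lemma whhl_und_approx (R : realType) (V : finType) (E : rel V) (len : V -> V -> R) :
  (2 <= #|V|)%N -> undirected_ok E len ->
  forall L, whhl_output_u E len L -> forall L', is_uHL E len L' ->
  (uHL_size L)%:R <= 8 * Num.sqrt #|V|%:R * ln #|V|%:R * (uHL_size L')%:R :> R.
Proof.
move=> n_ge2 [E_sym [_ [len_sym _]]] L [S [reach_S all_covered]] L' HL'.
have [_] := u_reach_potential E_sym len_sym HL' reach_S.
rewrite /= all_covered cards0; apply: approx_from_potential n_ge2 _.
apply: leq_trans (_ : #|[set [set p.1; p.2] | p : V * V]| <= _)%N.
  apply/subset_leq_card/subsetP => e /in_u_uncovered[u [w [-> _ _]]].
  by apply/imsetP; exists (u, w).
by apply: leq_trans (leq_imset_card _ _) _; rewrite card_prod.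
Qed.

Theorem mainTheorem6 (R : realType) :
  exists (C : R) (n0 : nat),
    (forall (V : finType) (E : rel V) (len : V -> V -> R),
       (n0 <= #|V|)%N -> directed_ok E len ->
       forall Lf Lb : V -> {set V}, whhl_output E len Lf Lb ->
       forall Lf' Lb' : V -> {set V}, is_dHL E len Lf' Lb' ->
         (dHL_size Lf Lb)%:R <=
           C * Num.sqrt (#|V|%:R) * ln (#|V|%:R) * (dHL_size Lf' Lb')%:R)
    /\
    (forall (V : finType) (E : rel V) (len : V -> V -> R),
       (n0 <= #|V|)%N -> undirected_ok E len ->
       forall L : V -> {set V}, whhl_output_u E len L ->
       forall L' : V -> {set V}, is_uHL E len L' ->
         (uHL_size L)%:R <=
           C * Num.sqrt (#|V|%:R) * ln (#|V|%:R) * (uHL_size L')%:R).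
Proof.
exists 8, 2%N; split=> V E len n_ge2 graph_ok.
- exact: whhl_dir_approx.
- exact: whhl_und_approx.
Qed.
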